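(* Let $k$ be a field. Every nondegenerate variety of representations of Lie algebras over $k$ is an IBN-variety.
   Context: A representation of a Lie algebra over $k$ is a two-sorted algebra ($\Gamma=\{1,2\}$): sort 1 is a Lie algebra $L$ over $k$ (operations $+,0,-$, a unary scalar multiplication by each $\lambda\in k$, and the bracket), sort 2 is a $k$-vector space $V$ (operations $+,0,-$ and a unary scalar multiplication by each $\lambda\in k$), and there is an action $\circ$ of type $(1,2;2)$ which is bilinear and satisfies $[a,b]\circ v=a\circ(b\circ v)-b\circ(a\circ v)$. A variety of representations of Lie algebras is a class of such representations defined by (two-sorted) identities. A two-sorted variety is nondegenerate if neither $x^{(1)}_1=x^{(1)}_2$ nor $x^{(2)}_1=x^{(2)}_2$ is an identity of it. It is an IBN-variety if for any free algebras $F(Y),F(Z)$ of the variety with finite free generating sets $Y=Y^{(1)}\uplus Y^{(2)}$, $Z=Z^{(1)}\uplus Z^{(2)}$ (split by sort), $F(Y)\cong F(Z)$ implies $|Y^{(1)}|=|Z^{(1)}|$ and $|Y^{(2)}|=|Z^{(2)}|$. *)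

From HB Require Import structures.
From mathcomp Require Import all_boot all_order all_algebra.
Set Implicit Arguments. Unset Strict Implicit. Unset Printing Implicit Defensive.
Import GRing.Theory.
Local Open Scope ring_scope.

(* sort 1: a Lie algebra L over k; sort 2: a k-vector space V;
   action o : L x V -> V, bilinear, with [a,b] o v = a o (b o v) - b o (a o v). *)
Record LieRep (k : fieldType) := {
  repL : lmodType k;
  repV : lmodType k;
  bracket : repL -> repL -> repL;
  action : repL -> repV -> repV;
  bracket_addl : forall a b c, bracket (a + b) c = bracket a c + bracket b c;
  bracket_addr : forall a b c, bracket a (b + c) = bracket a b + bracket a c;
  bracket_scalel : forall (l : k) a b, bracket (l *: a) b = l *: bracket a b;
  bracket_scaler : forall (l : k) a b, bracket a (l *: b) = l *: bracket a b;
  bracket_alt : forall a, bracket a a = 0;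
  bracket_jacobi : forall a b c,
    bracket a (bracket b c) + bracket b (bracket c a) + bracket c (bracket a b) = 0;
  action_addl : forall a b v, action (a + b) v = action a v + action b v;
  action_addr : forall a v w, action a (v + w) = action a v + action a w;
  action_scalel : forall (l : k) a v, action (l *: a) v = l *: action a v;
  action_scaler : forall (l : k) a v, action a (l *: v) = l *: action a v;
  action_bracket : forall a b v,
    action (bracket a b) v = action a (action b v) - action b (action a v)
}.

(* variables x^(1)_i (sort 1) and x^(2)_i (sort 2), i : nat *)
Inductive LTerm (k : fieldType) :=
| LVar of nat
| LZero
| LAdd of LTerm k & LTerm k
| LOpp of LTerm k
| LScale of k & LTerm k
| LBr of LTerm k & LTerm k.

Inductive VTerm (k : fieldType) :=
| VVar of nat
| VZero
| VAdd of VTerm k & VTerm k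
| VOpp of VTerm k
| VScale of k & VTerm k
| VAct of LTerm k & VTerm k.

Arguments LVar {k}. Arguments LZero {k}. Arguments VVar {k}. Arguments VZero {k}.

Fixpoint evalL k (A : LieRep k) (e1 : nat -> repL A) (t : LTerm k) : repL A :=
  match t with
  | LVar i => e1 i
  | LZero => 0
  | LAdd t1 t2 => evalL e1 t1 + evalL e1 t2
  | LOpp t1 => - evalL e1 t1
  | LScale l t1 => l *: evalL e1 t1
  | LBr t1 t2 => @bracket _ A (evalL e1 t1) (evalL e1 t2)
  end.

Fixpoint evalV k (A : LieRep k) (e1 : nat -> repL A) (e2 : nat -> repV A)
    (t : VTerm k) : repV A :=
  match t with
  | VVar i => e2 i
  | VZero => 0
  | VAdd t1 t2 => evalV e1 e2 t1 + evalV e1 e2 t2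
  | VOpp t1 => - evalV e1 e2 t1
  | VScale l t1 => l *: evalV e1 e2 t1
  | VAct s t1 => @action _ A (evalL e1 s) (evalV e1 e2 t1)
  end.

Inductive identity (k : fieldType) :=
| Ident1 of LTerm k & LTerm k
| Ident2 of VTerm k & VTerm k.

Definition satisfies k (A : LieRep k) (i : identity k) : Prop :=
  match i with
  | Ident1 t s => forall e1 : nat -> repL A, evalL e1 t = evalL e1 s
  | Ident2 t s => forall (e1 : nat -> repL A) (e2 : nat -> repV A),
                    evalV e1 e2 t = evalV e1 e2 s
  end.

Definition in_variety k (Sigma : identity k -> Prop) (A : LieRep k) : Prop :=
  forall i, Sigma i -> satisfies A i.

Definition identity_of k (Sigma : identity k -> Prop) (i : identity k) : Prop :=
  forall A : LieRep k, in_variety Sigma A -> satisfies A i.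

Definition nondegenerate_variety k (Sigma : identity k -> Prop) : Prop :=
  ~ identity_of Sigma (Ident1 (LVar 1) (LVar 2)) /\
  ~ identity_of Sigma (Ident2 (VVar 1) (VVar 2)).

Definition is_hom k (A B : LieRep k) (h1 : repL A -> repL B) (h2 : repV A -> repV B)
  : Prop :=
  (h1 0 = 0 /\ (forall a b, h1 (a + b) = h1 a + h1 b) /\ (forall a, h1 (- a) = - h1 a) /\
   (forall (l : k) a, h1 (l *: a) = l *: h1 a) /\
   (forall a b, h1 (@bracket _ A a b) = @bracket _ B (h1 a) (h1 b))) /\
  (h2 0 = 0 /\ (forall v w, h2 (v + w) = h2 v + h2 w) /\ (forall v, h2 (- v) = - h2 v) /\
   (forall (l : k) v, h2 (l *: v) = l *: h2 v)) /\
  (forall a v, h2 (@action _ A a v) = @action _ B (h1 a) (h2 v)).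

Definition isomorphic k (A B : LieRep k) : Prop :=
  exists (h1 : repL A -> repL B) (h2 : repV A -> repV B),
    [/\ is_hom h1 h2, bijective h1 & bijective h2].

(* F is free in the variety Sigma with free generating set Y = Y1 ⊎ Y2, where
   Y1 = {y1 i | i < n1} ⊆ L(F) and Y2 = {y2 j | j < n2} ⊆ V(F) are given by
   injective enumerations (so |Y1| = n1, |Y2| = n2). *)
Definition free_in_variety k (Sigma : identity k -> Prop) (F : LieRep k)
    (n1 n2 : nat) (y1 : 'I_n1 -> repL F) (y2 : 'I_n2 -> repV F) : Prop :=
  [/\ in_variety Sigma F, injective y1, injective y2 &
    forall (A : LieRep k), in_variety Sigma A ->
    forall (f1 : 'I_n1 -> repL A) (f2 : 'I_n2 -> repV A),
      (exists (h1 : repL F -> repL A) (h2 : repV F -> repV A),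
          [/\ is_hom h1 h2, (forall i, h1 (y1 i) = f1 i) & (forall j, h2 (y2 j) = f2 j)]) /\
      (forall (h1 g1 : repL F -> repL A) (h2 g2 : repV F -> repV A),
          is_hom h1 h2 -> is_hom g1 g2 ->
          (forall i, h1 (y1 i) = f1 i) -> (forall j, h2 (y2 j) = f2 j) ->
          (forall i, g1 (y1 i) = f1 i) -> (forall j, g2 (y2 j) = f2 j) ->
          h1 =1 g1 /\ h2 =1 g2)].

Definition IBN_variety k (Sigma : identity k -> Prop) : Prop :=
  forall (F G : LieRep k) (n1 n2 m1 m2 : nat)
         (y1 : 'I_n1 -> repL F) (y2 : 'I_n2 -> repV F)
         (z1 : 'I_m1 -> repL G) (z2 : 'I_m2 -> repV G),
    free_in_variety Sigma y1 y2 -> free_in_variety Sigma z1 z2 ->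
    isomorphic F G -> n1 = m1 /\ n2 = m2.

(* Idea: dualise against the one-dimensional trivial representation T = (k, k)
   with zero bracket and zero action.
   1. Nondegeneracy forces T into the variety: on a line every bracket vanishes,
      so a term evaluated at scalar multiples of one element a is a scalar
      multiple of a; an identity failing in T would then make x1 = x2 an
      identity of the variety.
   2. A homomorphism into T is a pair of independent linear functionals: one
      on the Lie sort killing brackets, one on the module sort killing the
      action.  Hence, if F is free on (y1, y2) and T is in the variety, every
      assignment of scalars to y1 (resp. y2) extends uniquely to such a
      functional: y1 and y2 are "free for" these spaces of functionals.
   3. Abstract counting lemma: if x is free for a space of functionals on X,
      y free for a space on Y closed under linear combinations, and a
      surjection X -> Y pulls back the second space into the first, then
      #|y| <= #|x| (we build an injective linear map k^#|y| -> k^#|x|).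
   Applying 3 to an isomorphism F ~ G and its inverse, in each sort, gives
   the equality of the numbers of free generators. *)

From HB Require Import structures.
From mathcomp Require Import all_boot all_order all_algebra.
From mathcomp Require Import ring.
From Stdlib Require Import ClassicalEpsilon.
Import GRing.Theory.
Local Open Scope ring_scope.
Set Implicit Arguments. Unset Strict Implicit.

Section IBN.
Variable k : fieldType.

Lemma injective_linear_le m n (f : 'rV[k]_m -> 'rV[k]_n) :
  (forall (a : k) u w, f (a *: u + w) = a *: f u + f w) ->
  (forall u, f u = 0 -> u = 0) -> (m <= n)%N.
Proof.
move=> f_lin f_ker.
pose g : {linear 'rV[k]_m -> 'rV[k]_n} :=
  HB.pack f (GRing.isLinear.Build k _ _ _ f f_lin).
have : row_free (lin1_mx g) by apply: inj_row_free => v; rewrite mul_rV_lin1; exact: f_ker.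
by rewrite /row_free => /eqP <-; exact: rank_leq_col.
Qed.

Definition free_for (X : Type) (H : (X -> k) -> Prop) n (x : 'I_n -> X) : Prop :=
  (forall f : 'I_n -> k, exists h, H h /\ forall i, h (x i) = f i) /\
  (forall h g, H h -> H g -> (forall i, h (x i) = g (x i)) -> h =1 g).

Definition comb_closed (X : Type) (H : (X -> k) -> Prop) : Prop :=
  forall c h g, H h -> H g -> H (fun t => c * h t + g t).

(* If a surjection p : X -> Y pulls H_Y back into H_X, then the map sending
   an assignment u on y to the values of its extension on p \o x is linear
   and injective, so y has at most as many elements as x. *)
Lemma free_for_le (X Y : Type) (HX : (X -> k) -> Prop) (HY : (Y -> k) -> Prop)
    n m (x : 'I_n -> X) (y : 'I_m -> Y) (p : X -> Y) (q : Y -> X) :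
  comb_closed HY -> HX (fun _ => 0) -> free_for HX x -> free_for HY y ->
  cancel q p -> (forall h, HY h -> HX (h \o p)) -> (m <= n)%N.
Proof.
move=> HY_comb HX0 [_ x_uniq] [y_ext y_uniq] qK pullback.
have ext (f : 'I_m -> k) : {h | HY h /\ forall j, h (y j) = f j}.
  by apply: constructive_indefinite_description; exact: y_ext.
pose P (u : 'rV[k]_m) : 'rV[k]_n := \row_i sval (ext (fun j => u 0 j)) (p (x i)).
apply: (@injective_linear_le _ _ P).
- move=> a u w; apply/rowP => i; rewrite !mxE.
  case: (ext _) => hauw [Hauw Eauw]; case: (ext _) => hu [Hu Eu].
  case: (ext _) => hw [Hw Ew] /=.
  have comb : hauw =1 (fun t => a * hu t + hw t).
    by apply: y_uniq (HY_comb a _ _ Hu Hw) _ => // j; rewrite Eauw Eu Ew !mxE.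
  exact: comb.
- move=> u; rewrite /P; case: (ext _) => h [Hh Eh] /rowP Pu.
  have vanish : h \o p =1 (fun _ => 0).
    by apply: x_uniq (pullback _ Hh) HX0 _ => i; have := Pu i; rewrite !mxE.
  by apply/rowP => j; rewrite mxE -Eh -(qK (y j)) [LHS]vanish.
Qed.

Lemma is_hom_comp (A B C : LieRep k) f1 f2 g1 g2 :
  @is_hom k A B f1 f2 -> @is_hom k B C g1 g2 -> is_hom (g1 \o f1) (g2 \o f2).
Proof.
move=> [[f0 [fD [fN [fZ fB]]]] [[v0 [vD [vN vZ]]] fA]].
move=> [[g0 [gD [gN [gZ gB]]]] [[w0 [wD [wN wZ]]] gA]].
by do !split => * /=;
  rewrite ?f0 ?fD ?fN ?fZ ?fB ?v0 ?vD ?vN ?vZ ?fA ?g0 ?gD ?gN ?gZ ?gB ?w0 ?wD ?wN ?wZ ?gA.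
Qed.

Lemma is_hom_inverse (A B : LieRep k) f1 f2 g1 g2 :
  @is_hom k A B f1 f2 -> cancel f1 g1 -> cancel g1 f1 -> cancel f2 g2 -> cancel g2 f2 ->
  is_hom g1 g2.
Proof.
move=> [[f0 [fD [fN [fZ fB]]]] [[v0 [vD [vN vZ]]] fA]] f1K g1K f2K g2K.
have i1 := can_inj f1K; have i2 := can_inj f2K.
do !split => *; first [apply: i1 | apply: i2];
  by rewrite ?f0 ?fD ?fN ?fZ ?fB ?v0 ?vD ?vN ?vZ ?fA ?g1K ?g2K.
Qed.

Definition trivial_rep : LieRep k.
refine (@Build_LieRep k k^o k^o (fun _ _ => 0) (fun _ _ => 0) _ _ _ _ _ _ _ _ _ _ _);
  by intros; rewrite ?addr0 ?scaler0 ?subrr.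
Defined.

(* Terms evaluated on a line: brackets vanish there, so evaluating at multiples
   e_j *: a gives the evaluation in the trivial representation times a. *)
Lemma evalL_line (A : LieRep k) (a : repL A) (e : nat -> k) t :
  evalL (fun j => e j *: a) t = (@evalL _ trivial_rep e t : k) *: a.
Proof.
elim: t => [j||t1 IH1 t2 IH2|t IH|l t IH|t1 IH1 t2 IH2] //=.
- by rewrite scale0r.
- by rewrite IH1 IH2 scalerDl.
- by rewrite IH scaleNr.
- by rewrite IH scalerA.
- by rewrite IH1 IH2 bracket_scalel bracket_scaler bracket_alt !scaler0 scale0r.
Qed.

Lemma evalL0 (A : LieRep k) t : evalL (fun _ => (0 : repL A)) t = 0.
Proof. by have := evalL_line (0 : repL A) (fun _ => 0) t; rewrite !scaler0. Qed.

Lemma action0 (A : LieRep k) (v : repV A) : action 0 v = 0.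
Proof. by rewrite -(scale0r (0 : repL A)) action_scalel scale0r. Qed.

Lemma evalV_line (A : LieRep k) (v : repV A) (e1 e2 : nat -> k) t :
  evalV (fun _ => (0 : repL A)) (fun j => e2 j *: v) t
  = (@evalV _ trivial_rep e1 e2 t : k) *: v.
Proof.
elim: t => [j||t1 IH1 t2 IH2|t IH|l t IH|s t IH] //=.
- by rewrite scale0r.
- by rewrite IH1 IH2 scalerDl.
- by rewrite IH scaleNr.
- by rewrite IH scalerA.
- by rewrite evalL0 action0 scale0r.
Qed.

Lemma scale_neq_eq (V : lmodType k) (c d : k) (a b : V) :
  c != d -> c *: (a - b) = d *: (a - b) -> a = b.
Proof.
move=> cd /eqP; rewrite -subr_eq0 -scalerBl scaler_eq0 subr_eq0 (negbTE cd) /=.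
by rewrite subr_eq0 => /eqP.
Qed.

Lemma trivial_rep_in_variety Sigma :
  nondegenerate_variety Sigma -> in_variety Sigma trivial_rep.
Proof.
case=> nd1 nd2 [t s|t s] Ht /= => [e|e1 e2].
- have [//|ne] := eqVneq (@evalL _ trivial_rep e t) (@evalL _ trivial_rep e s).
  exfalso; apply: nd1 => A HA f /=; apply: (scale_neq_eq ne).
  by rewrite -!evalL_line; exact: (HA _ Ht).
- have [//|ne] := eqVneq (@evalV _ trivial_rep e1 e2 t) (@evalV _ trivial_rep e1 e2 s).
  exfalso; apply: nd2 => A HA f1 f2 /=; apply: (scale_neq_eq ne).
  by rewrite -!(evalV_line _ e1); exact: (HA _ Ht).
Qed.

Definition L_functional (A : LieRep k) (h : repL A -> k) : Prop :=
  [/\ h 0 = 0, (forall a b, h (a + b) = h a + h b), (forall a, h (- a) = - h a),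
      (forall (l : k) a, h (l *: a) = l * h a) & (forall a b, h (bracket a b) = 0)].

Definition V_functional (A : LieRep k) (h : repV A -> k) : Prop :=
  [/\ h 0 = 0, (forall v w, h (v + w) = h v + h w), (forall v, h (- v) = - h v),
      (forall (l : k) v, h (l *: v) = l * h v) & (forall a v, h (action a v) = 0)].

Lemma is_hom_trivial (A : LieRep k) (h1 : repL A -> k) (h2 : repV A -> k) :
  @is_hom k A trivial_rep h1 h2 <-> L_functional h1 /\ V_functional h2.
Proof.
split; first by case=> [[? [? [? [? ?]]]] [[? [? [? ?]]] ?]]; split; split.
by case=> [[? ? ? ? ?] [? ? ? ? ?]]; do !split.
Qed.

Lemma L_functional0 (A : LieRep k) : @L_functional A (fun _ => 0).
Proof. by split=> *; rewrite ?addr0 ?oppr0 ?mulr0. Qed.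

Lemma V_functional0 (A : LieRep k) : @V_functional A (fun _ => 0).
Proof. by split=> *; rewrite ?addr0 ?oppr0 ?mulr0. Qed.

Lemma L_functional_comb (A : LieRep k) : comb_closed (@L_functional A).
Proof.
move=> c h g [h0 hD hN hZ hB] [g0 gD gN gZ gB].
split=> *; rewrite ?h0 ?g0 ?hD ?gD ?hN ?gN ?hZ ?gZ ?hB ?gB; ring.
Qed.

Lemma V_functional_comb (A : LieRep k) : comb_closed (@V_functional A).
Proof.
move=> c h g [h0 hD hN hZ hB] [g0 gD gN gZ gB].
split=> *; rewrite ?h0 ?g0 ?hD ?gD ?hN ?gN ?hZ ?gZ ?hB ?gB; ring.
Qed.

Lemma functional_pullback (A B : LieRep k) (p1 : repL A -> repL B) p2 :
  is_hom p1 p2 ->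
  (forall h, L_functional h -> L_functional (h \o p1)) /\
  (forall h, V_functional h -> V_functional (h \o p2)).
Proof.
move=> hp; split=> h Hh.
- have /(is_hom_comp hp) /is_hom_trivial [] // : @is_hom k B trivial_rep h (fun _ => 0).
  by apply/is_hom_trivial; split; last exact: V_functional0.
- have /(is_hom_comp hp) /is_hom_trivial [] // : @is_hom k B trivial_rep (fun _ => 0) h.
  by apply/is_hom_trivial; split; first exact: L_functional0.
Qed.

Lemma free_functionals Sigma (F : LieRep k) n1 n2
    (y1 : 'I_n1 -> repL F) (y2 : 'I_n2 -> repV F) :
  in_variety Sigma trivial_rep -> free_in_variety Sigma y1 y2 ->
  free_for (@L_functional F) y1 /\ free_for (@V_functional F) y2.
Proof.
move=> HT [_ _ _ /(_ _ HT) free].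
have hom0L h : L_functional h -> @is_hom k F trivial_rep h (fun _ => 0).
  by move=> Hh; apply/is_hom_trivial; split; last exact: V_functional0.
have hom0V h : V_functional h -> @is_hom k F trivial_rep (fun _ => 0) h.
  by move=> Hh; apply/is_hom_trivial; split; first exact: L_functional0.
split; split.
- move=> f; have [[h1 [h2 [/is_hom_trivial [H1 _] E1 _]]] _] := free f (fun _ => 0).
  by exists h1.
- move=> h g Hh Hg E.
  by case: ((free (h \o y1) (fun _ => 0)).2 _ _ _ _ (hom0L _ Hh) (hom0L _ Hg)
              (fun=> erefl) (fun=> erefl) (fun i => esym (E i)) (fun=> erefl)).
- move=> f; have [[h1 [h2 [/is_hom_trivial [_ H2] _ E2]]] _] := free (fun _ => 0) f.
  by exists h2.
- move=> h g Hh Hg E.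
  by case: ((free (fun _ => 0) (h \o y2)).2 _ _ _ _ (hom0V _ Hh) (hom0V _ Hg)
              (fun=> erefl) (fun=> erefl) (fun=> erefl) (fun i => esym (E i))).
Qed.

End IBN.

Theorem mainTheorem19 (k : fieldType) (Sigma : identity k -> Prop) :
  nondegenerate_variety Sigma -> IBN_variety Sigma.
Proof.
move=> nd F G n1 n2 m1 m2 y1 y2 z1 z2 HF HG [p1 [p2 [hp [q1 p1K q1K] [q2 p2K q2K]]]].
have HT := trivial_rep_in_variety nd.
have [FL FV] := free_functionals HT HF.
have [GL GV] := free_functionals HT HG.
have [pullL pullV] := functional_pullback hp.
have [pullL' pullV'] := functional_pullback (is_hom_inverse hp p1K q1K p2K q2K).
split; apply/eqP; rewrite eqn_leq; apply/andP; split.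
- exact: free_for_le (@L_functional_comb _ F) (@L_functional0 _ G) GL FL p1K pullL'.
- exact: free_for_le (@L_functional_comb _ G) (@L_functional0 _ F) FL GL q1K pullL.
- exact: free_for_le (@V_functional_comb _ F) (@V_functional0 _ G) GV FV p2K pullV'.
- exact: free_for_le (@V_functional_comb _ G) (@V_functional0 _ F) FV GV q2K pullV.
Qed.
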